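(* Let $S$ be an instance of 3-Partition (with $n_1\ge\cdots\ge n_{3m}$) and let $w_S$ and $\mathrm{Ver}_S$ be as defined below. (i) For any sequence of non-negative integers $\langle i_k\rangle_{k=1}^{3m}$ such that $i_{3j-2}+i_{3j-1}+i_{3j}=B$ for every $j\in\{1,\dots,m\}$, there is a computation $\varepsilon\,\|\,w_S\vdash^*\prod_{k=1}^{3m}(a_1b^{i_k}a_2)\,\|\,\mathrm{Ver}_S$. (ii) Conversely, if $\varepsilon\,\|\,w_S\vdash^* W\,\|\,\mathrm{Ver}_S\vdash^*\varepsilon\,\|\,\varepsilon$ (i.e. the configuration $W\,\|\,\mathrm{Ver}_S$ is reached in an accepting computation of $w_S$), then $W=\prod_{k=1}^{3m}(a_1b^{i_k}a_2)$ for some non-negative integers $i_1,\dots,i_{3m}$ satisfying $i_{3j-2}+i_{3j-1}+i_{3j}=B$ for every $j\in\{1,\dots,m\}$.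
   Context: Queue automaton: a configuration is written $Q\,\|\,x$ ($Q$ = queue contents, $x$ = remaining input); a step from $Q\,\|\,\sigma x$ ($\sigma$ a symbol) goes either to $Q\sigma\,\|\,x$ (push) or, if $Q=\sigma Q'$, to $Q'\,\|\,x$ (match/pop). $\vdash^*$ is zero or more steps; $\varepsilon$ is the empty string; an accepting computation of $w$ is a computation $\varepsilon\,\|\,w\vdash^*\varepsilon\,\|\,\varepsilon$. An instance of 3-Partition is a sequence $S=\langle n_i:1\le i\le 3m\rangle$ of natural numbers such that $B=(\sum_{i=1}^{3m}n_i)/m$ is an integer and $B/4<n_i<B/2$ for all $i$; throughout, the $n_i$ are assumed to be in non-increasing order. The alphabet is $\{a_1,a_2,b,e_0,e,c_1,c_2,x,y\}$; $u^i$ denotes $i$ concatenated copies of $u$ and $\prod_{\ell=1}^k u_\ell=u_1u_2\cdots u_k$. Define $U_\ell=a_1^2b^\ell a_2^2$, $v_\ell=c_1x^\ell y^\ell c_2$, $D_k=U_{n_k}^{3m-k+1}$, $E_k=U_B^{3m-k}\,a_1b^{n_k}a_2\,U_B^{3m-k}$, $F_k=U_B^{2(3m-k)}$, and $\mathrm{Load}_S=e_0\prod_{i=1}^m(b^{2B}e)$, $\mathrm{Dist}_S=e_0\prod_{i=1}^m((a_1b^Ba_2)^3e)$, $\mathrm{Ver}_S=\prod_{k=1}^{3m}[v_{4k-3}D_kv_{4k-3}\,v_{4k-2}D_kv_{4k-2}\,v_{4k-1}E_kv_{4k-1}\,v_{4k}F_kv_{4k}]$, and $w_S=\mathrm{Load}_S\mathrm{Dist}_S\mathrm{Ver}_S$.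 *)

From mathcomp Require Import all_boot.
Set Implicit Arguments. Unset Strict Implicit. Unset Printing Implicit Defensive.

Inductive sym := a1 | a2 | b | e0 | e | c1 | c2 | x | y.

(* Queue automaton configurations Q || w, as pairs (Q, w). *)
Definition config := (seq sym * seq sym)%type.

Inductive qstep : config -> config -> Prop :=
| qpush (Q w : seq sym) (s : sym) : qstep (Q, s :: w) (rcons Q s, w)
| qpop (Q w : seq sym) (s : sym) : qstep (s :: Q, s :: w) (Q, w).

Inductive qsteps : config -> config -> Prop :=
| qsteps_refl c : qsteps c c
| qsteps_step c1' c2' c3' : qstep c1' c2' -> qsteps c2' c3' -> qsteps c1' c3'.

Definition pw (u : seq sym) (i : nat) : seq sym := flatten (nseq i u).

(* 1-based access n_k of the instance S = <n_1, ..., n_{3m}> *)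
Definition nk (S : seq nat) (k : nat) : nat := nth 0 S k.-1.

Definition three_partition_instance (m B : nat) (S : seq nat) : Prop :=
  0 < m /\ size S = 3 * m /\ sumn S = m * B /\
  (forall k, 1 <= k <= 3 * m -> B < 4 * nk S k /\ 2 * nk S k < B).

Section Words.
Variables (m B : nat) (S : seq nat).

Definition U (l : nat) : seq sym := [:: a1; a1] ++ nseq l b ++ [:: a2; a2].
Definition v (l : nat) : seq sym := c1 :: nseq l x ++ nseq l y ++ [:: c2].
Definition D (k : nat) : seq sym := pw (U (nk S k)) (3 * m - k + 1).
Definition E (k : nat) : seq sym :=
  pw (U B) (3 * m - k) ++ [:: a1] ++ nseq (nk S k) b ++ [:: a2] ++ pw (U B) (3 * m - k).
Definition F (k : nat) : seq sym := pw (U B) (2 * (3 * m - k)).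

Definition Load : seq sym := e0 :: pw (nseq (2 * B) b ++ [:: e]) m.
Definition Dist : seq sym := e0 :: pw (pw ([:: a1] ++ nseq B b ++ [:: a2]) 3 ++ [:: e]) m.
Definition Ver_block (k : nat) : seq sym :=
  v (4 * k - 3) ++ D k ++ v (4 * k - 3) ++
  v (4 * k - 2) ++ D k ++ v (4 * k - 2) ++
  v (4 * k - 1) ++ E k ++ v (4 * k - 1) ++
  v (4 * k) ++ F k ++ v (4 * k).
Definition Ver : seq sym := flatten [seq Ver_block k | k <- iota 1 (3 * m)].
Definition wS : seq sym := Load ++ Dist ++ Ver.

Definition Wof (i : nat -> nat) : seq sym :=
  flatten [seq [:: a1] ++ nseq (i k) b ++ [:: a2] | k <- iota 1 (3 * m)].

Definition triple_sums_B (i : nat -> nat) : Prop :=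
  forall j, 1 <= j <= m -> i (3 * j - 2) + i (3 * j - 1) + i (3 * j) = B.
End Words.

From Pilot Require Import Defs.
From mathcomp Require Import all_boot.
From HB Require Import structures.
From mathcomp Require Import zify.

(* Part (i) is a direct simulation: push all of Load; then the e0 of Dist pops
   the e0 of Load, and in each block of Dist the slot a1 b^B a2 for i_k pops
   B - i_k of the b's at the front of the queue and pushes a1 b^(i_k) a2, so
   that a triple summing to B consumes exactly the 2B b's of a block of Load,
   whose e is then popped by the e of the Dist block.
   For (ii), a symbol left in the queue can only disappear by matching an
   equal input symbol later, so W contains neither e nor e0, as Ver contains
   neither.  This forces the e0 of Load to be pushed and popped by the e0 of
   Dist, and each e of Dist to pop the e of a block of Load, which it can only do
   after the three slots before it have popped all 2B b's of that block; a
   slot read against a front of b's can only pop some b's and push a slot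
   a1 b^i a2 with i <= B, whence the triple sums. *)

Definition sym_eqb (s t : sym) : bool :=
  match s, t with
  | a1, a1 | a2, a2 | b, b | e0, e0 | e, e | c1, c1 | c2, c2 | x, x | y, y => true
  | _, _ => false end.

Lemma sym_eqP : Equality.axiom sym_eqb.
Proof. by case; case; constructor. Qed.

HB.instance Definition _ := hasDecEq.Build sym sym_eqP.

Inductive run : seq sym -> seq sym -> seq sym -> Prop :=
| run_nil Q : run Q [::] Q
| run_push Q s u W : run (rcons Q s) u W -> run Q (s :: u) W
| run_pop Q s u W : run Q u W -> run (s :: Q) (s :: u) W.

Lemma run_nilE Q W : run Q [::] W -> W = Q.
Proof. by move=> H; inversion H. Qed.

Lemma run_consE Q s u W : run Q (s :: u) W ->
  run (rcons Q s) u W \/ exists2 Q', Q = s :: Q' & run Q' u W.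
Proof. by move=> H; inversion H; subst; [left | right; exists Q0]. Qed.

Lemma run_cat Q u1 u2 W : run Q (u1 ++ u2) W -> exists2 Q', run Q u1 Q' & run Q' u2 W.
Proof.
elim: u1 Q => [|s u1 IH] Q /=; first by exists Q => //; constructor.
case/run_consE => [/IH [Q1 H1 H2] | [Q' -> /IH [Q1 H1 H2]]];
  by exists Q1 => //; constructor.
Qed.

Lemma run_catI Q u1 u2 Q' W : run Q u1 Q' -> run Q' u2 W -> run Q (u1 ++ u2) W.
Proof. by elim=> [//|{}Q s u Q2 _ IH|{}Q s u Q2 _ IH] H /=; constructor; apply: IH. Qed.

Lemma run_push_all Q u : run Q u (Q ++ u).
Proof.
elim: u Q => [|s u IH] Q; first by rewrite cats0; constructor.
by constructor; rewrite -cat_rcons; apply: IH.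
Qed.

Lemma run_pop_all p Q u W : run Q u W -> run (p ++ Q) (p ++ u) W.
Proof. by elim: p => [//|s p IH] H /=; apply/run_pop/IH. Qed.

Lemma run_count s Q u W : run Q u W -> count_mem s Q <= count_mem s W + count_mem s u.
Proof.
elim=> [{}Q|{}Q s0 {}u {}W _ IH|{}Q s0 {}u {}W _ IH] /=; first lia.
  by move: IH; rewrite -cats1 count_cat /=; lia.
by rewrite addnCA leq_add2l.
Qed.

Lemma run_mem s Q u W : run Q u W -> s \in Q -> s \notin u -> s \in W.
Proof. by move=> /(run_count s); rewrite -!has_pred1 !has_count; lia. Qed.

Lemma run_blocked_front s Q u W : s \notin u -> run (s :: Q) u W -> W = s :: Q ++ u.
Proof.
elim: u Q => [|t u IH] Q; first by move=> _ /run_nilE ->; rewrite cats0.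
rewrite in_cons negb_or => /andP[st su] /run_consE [/(IH _ su) -> | [Q' [ts] _]].
  by rewrite /= cat_rcons.
by rewrite ts eqxx in st.
Qed.

Lemma qsteps_input_size c c' : qsteps c c' -> size c'.2 <= size c.2.
Proof. by elim=> [//|? ? ? [Q w s|Q w s] _ /= /leqW]. Qed.

Lemma qstepsE c c' : qsteps c c' -> c = c' \/ exists2 c'', qstep c c'' & qsteps c'' c'.
Proof. by case=> [|? c'' ? st rest]; [left | right; exists c'']. Qed.

Lemma qsteps_same_input Q W r : qsteps (Q, r) (W, r) -> W = Q.
Proof.
case/qstepsE => [[->] // | [c st /qsteps_input_size]].
by inversion st; subst; rewrite /= ltnn.
Qed.

Lemma qsteps_run Q u r W : qsteps (Q, u ++ r) (W, r) -> run Q u W.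
Proof.
elim: u Q => [|s u IH] Q /= H; first by move/qsteps_same_input: H ->; constructor.
case/qstepsE: H => [[_ /(congr1 size)] | [c st rest]].
  by rewrite /= size_cat; lia.
by inversion st; subst; constructor; apply: IH.
Qed.

Lemma run_qsteps Q u W r : run Q u W -> qsteps (Q, u ++ r) (W, r).
Proof.
elim=> [{}Q|{}Q s {}u {}W _ IH|{}Q s {}u {}W _ IH]; first by constructor.
  by apply: qsteps_step IH; constructor.
by apply: qsteps_step IH; constructor.
Qed.

Lemma qstep_queue_sub c c' : qstep c c' -> {subset c'.1 <= c'.2} -> {subset c.1 <= c.2}.
Proof.
case=> Q w s /= sub t.
  by rewrite in_cons => tQ; rewrite sub ?orbT // mem_rcons in_cons tQ orbT.
by rewrite !in_cons => /orP [-> // | /sub ->]; rewrite orbT.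
Qed.

Lemma qsteps_queue_sub c c' : qsteps c c' -> {subset c'.1 <= c'.2} -> {subset c.1 <= c.2}.
Proof. by elim=> // ? ? ? /qstep_queue_sub st _ IH /IH. Qed.

Lemma qsteps_accept_sub Q w : qsteps (Q, w) ([::], [::]) -> {subset Q <= w}.
Proof. by move/qsteps_queue_sub; apply. Qed.

Definition slot (i : nat) : seq sym := [:: a1] ++ nseq i b ++ [:: a2].

Lemma run_bsE N k R W : run (nseq k b ++ e :: R) (nseq N b) W ->
  exists i, [/\ i <= N, N - i <= k & W = nseq (k - (N - i)) b ++ e :: R ++ nseq i b].
Proof.
elim: N k R => [|N IH] k R /=.
  by move/run_nilE ->; exists 0; split; rewrite ?subn0 ?cats0.
case/run_consE => [| [Q]].
  rewrite rcons_cat rcons_cons => /IH [i [le_iN le_k ->]].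
  by exists i.+1; split; rewrite ?subSS ?cat_rcons.
case: k => [|k] //= [<-] /IH [i [le_iN le_k ->]].
by exists i; split; [lia | lia | congr (nseq _ _ ++ _); lia].
Qed.

Lemma run_push_blocked s k R W : s != b -> s != e ->
  run (nseq k b ++ e :: R) [:: s] W -> W = nseq k b ++ e :: rcons R s.
Proof.
move=> sb se /run_consE [/run_nilE -> | [Q sQ _]]; first by rewrite rcons_cat.
by case: k sQ => [|k] [sQ]; rewrite sQ eqxx in sb se.
Qed.

Lemma run_slotE N k R W : run (nseq k b ++ e :: R) (slot N) W ->
  exists i, [/\ i <= N, N - i <= k & W = nseq (k - (N - i)) b ++ e :: R ++ slot i].
Proof.
case/run_cat => Q /run_push_blocked -> // /run_cat [Q'].
case/run_bsE => i [le_iN le_k ->] /run_push_blocked -> //.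
by exists i; split; rewrite // -cats1 -!catA /= cat_rcons.
Qed.

Lemma run_bs p q r R : run (nseq (p + r) b ++ R) (nseq (p + q) b) (nseq r b ++ R ++ nseq q b).
Proof. by rewrite !nseqD -!catA; apply/run_pop_all; rewrite catA; apply: run_push_all. Qed.

Lemma run_slot N i k R : i <= N -> N - i <= k ->
  run (nseq k b ++ R) (slot N) (nseq (k - (N - i)) b ++ R ++ slot i).
Proof.
move=> le_iN le_k; apply: run_push; rewrite rcons_cat.
have := run_bs (N - i) i (k - (N - i)) (rcons R a1); rewrite subnKC // subnK //.
move/run_catI; apply.
by rewrite /slot /= -cat_rcons !catA; apply: run_push_all.
Qed.

Definition load_block (B : nat) : seq sym := nseq (2 * B) b ++ [:: e].
Definition dist_block (B : nat) : seq sym := pw (slot B) 3 ++ [:: e].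

Lemma LoadE m B : Defs.Load m B = e0 :: pw (load_block B) m.
Proof. by []. Qed.

Lemma DistE m B : Dist m B = e0 :: pw (dist_block B) m.
Proof. by []. Qed.

Lemma pwS (u : seq sym) n : pw u n.+1 = u ++ pw u n.
Proof. by []. Qed.

Lemma count_pw (s : sym) u n : count_mem s (pw u n) = n * count_mem s u.
Proof. by elim: n => [//|n IH]; rewrite pwS count_cat IH mulSn. Qed.

Lemma pw_load_blockS B n P :
  pw (load_block B) n.+1 ++ P = nseq (2 * B) b ++ e :: pw (load_block B) n ++ P.
Proof. by rewrite pwS -!catA. Qed.

Lemma pw_dist_blockS B n :
  pw (dist_block B) n.+1 = slot B ++ slot B ++ slot B ++ e :: pw (dist_block B) n.
Proof. by rewrite pwS /dist_block /pw; move: (slot B) => u /=; rewrite cats0 -!catA. Qed.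

Lemma notin_pw s u n : s \notin u -> s \notin pw u n.
Proof. by move/count_memPn => su; apply/count_memPn; rewrite count_pw su muln0. Qed.

Definition triple_sums (B n : nat) (l : seq nat) : Prop :=
  forall q, q < n -> nth 0 l (3 * q) + nth 0 l (3 * q + 1) + nth 0 l (3 * q + 2) = B.

Lemma triple_sums_cons B n i1 i2 i3 l :
  triple_sums B n.+1 [:: i1, i2, i3 & l] <-> i1 + i2 + i3 = B /\ triple_sums B n l.
Proof.
have shift q r : 3 * q.+1 + r = (3 * q + r).+3 by lia.
have shift0 q : 3 * q.+1 = (3 * q).+3 by lia.
split=> [sums | [sum0 sums] [_ | q]].
- split=> [|q lt_qn]; first exact: (sums 0).
  by have := sums q.+1 lt_qn; rewrite !shift shift0.
- exact: sum0.
- by rewrite ltnS => /sums; rewrite !shift shift0.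
Qed.

Lemma run_dist_blocksE B n P W : e \notin P -> e \notin W ->
  run (pw (load_block B) n ++ P) (pw (dist_block B) n) W ->
  exists2 l, size l = 3 * n /\ triple_sums B n l & W = P ++ flatten (map slot l).
Proof.
elim: n P => [|n IH] P eP eW.
  by move/run_nilE ->; exists [::]; rewrite ?cats0.
rewrite pw_load_blockS pw_dist_blockS; set R := pw (load_block B) n ++ P.
case/run_cat => ? /run_slotE [i1 [le1 ge1 ->]].
case/run_cat => ? /run_slotE [i2 [le2 ge2 ->]].
case/run_cat => ? /run_slotE [i3 [le3 ge3 ->]].
(* Pushing the e of the block would leave more e's in the queue than remain
   in the input; popping it needs all 2B b's of the load block gone. *)
case/run_consE => [/(run_count e) | [Q]].
  rewrite (count_memPn eW) -cats1 !count_cat /= !count_cat (count_memPn eP).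
  rewrite !count_pw /load_block /dist_block !count_cat ?count_pw /= !count_nseq /=; lia.
case b_left: (_ - (B - i3)) => [|k] //= [<-].
have eP' : e \notin P ++ slot i1 ++ slot i2 ++ slot i3.
  by apply/count_memPn; rewrite !count_cat (count_memPn eP) /= !count_nseq.
rewrite /R -3!catA => /(IH _ eP' eW) [l [size_l sums_l] ->].
exists [:: i1, i2, i3 & l]; last by rewrite <- !catA.
by split; [rewrite /= size_l; lia | apply/triple_sums_cons; split => //; lia].
Qed.

Lemma run_dist_blocks B n P l : size l = 3 * n -> triple_sums B n l ->
  run (pw (load_block B) n ++ P) (pw (dist_block B) n) (P ++ flatten (map slot l)).
Proof.
elim: n P l => [|n IH] P l.
  by case: l => // _ _; rewrite cats0; constructor.
rewrite mulnS; case: l => [|i1 [|i2 [|i3 l]]] // [size_l] /triple_sums_cons [sum_i sums_l].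
rewrite pw_load_blockS pw_dist_blockS; set R := pw (load_block B) n ++ P.
apply: run_catI (run_slot B i1 (2 * B) (e :: R) _ _) _; [lia | lia |].
apply: run_catI (run_slot B i2 _ _ _ _) _; [lia | lia |].
apply: run_catI (run_slot B i3 _ _ _ _) _; [lia | lia |].
have -> : 2 * B - (B - i1) - (B - i2) - (B - i3) = 0 by lia.
apply: (run_pop (((R ++ slot i1) ++ slot i2) ++ slot i3)); rewrite /R -3!catA.
by have := IH (P ++ slot i1 ++ slot i2 ++ slot i3) l size_l sums_l; rewrite <- !catA.
Qed.

Lemma run_Load_Dist m B l : size l = 3 * m -> triple_sums B m l ->
  run [::] (Defs.Load m B ++ Dist m B) (flatten (map slot l)).
Proof.
move=> size_l sums_l; apply: run_catI (run_push_all [::] (Defs.Load m B)) _.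
rewrite LoadE DistE; apply: run_pop; rewrite -[pw _ m]cats0.
exact: run_dist_blocks.
Qed.

Lemma run_Load_DistE m B W : e \notin W -> e0 \notin W ->
  run [::] (Defs.Load m B ++ Dist m B) W ->
  exists2 l, size l = 3 * m /\ triple_sums B m l & W = flatten (map slot l).
Proof.
have e0_slot : e0 \notin slot B by rewrite !mem_cat mem_nseq andbF.
have e0_load : e0 \notin pw (load_block B) m.
  by apply: notin_pw; rewrite mem_cat mem_nseq andbF.
have e0_dist : e0 \notin pw (dist_block B) m.
  by apply: notin_pw; rewrite mem_cat negb_or notin_pw.
move=> eW e0W /run_cat [Q]; rewrite LoadE DistE.
case/run_consE => [/(run_blocked_front _ _ _ _ e0_load) -> /= | [] //].
case/run_consE => [/(run_mem e0) | [_ [<-]]].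
  by rewrite mem_rcons mem_head (negbTE e0W) => /(_ isT e0_dist).
by rewrite -[pw _ m]cats0 => /run_dist_blocksE; apply.
Qed.

Lemma all_flatten (T : Type) (p : pred T) (ss : seq (seq T)) :
  all p (flatten ss) = all (all p) ss.
Proof. by elim: ss => [//|s ss IH] /=; rewrite all_cat IH. Qed.

Lemma all_pw (p : pred sym) u n : all p (pw u n) = (n == 0) || all p u.
Proof. by rewrite all_flatten all_nseq. Qed.

Lemma Ver_free m B S : all [predC [:: e; e0]] (Ver m B S).
Proof.
rewrite all_flatten all_map; apply/allP => k _.
rewrite /= /Ver_block /v /D /E /F /U.
by do ![rewrite !(all_cat, all_pw, all_nseq) /=]; rewrite !orbT.
Qed.

Lemma Wof_slots m i : Wof m i = flatten (map slot [seq i k | k <- iota 1 (3 * m)]).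
Proof. by rewrite -map_comp. Qed.

Lemma map_nth_iota1 l : [seq nth 0 l k.-1 | k <- iota 1 (size l)] = l.
Proof. by rewrite -[1]/(1 + 0) iotaDl -map_comp; apply: mkseq_nth. Qed.

Lemma triple_sums_BE m B i :
  triple_sums_B m B i <-> triple_sums B m [seq i k | k <- iota 1 (3 * m)].
Proof.
have nth_i r : r < 3 * m -> nth 0 [seq i k | k <- iota 1 (3 * m)] r = i r.+1.
  by move=> lt_r; rewrite (nth_map 0) ?size_iota // nth_iota // add1n.
split=> [sums q lt_qm | sums j /andP [j_gt0 j_le]].
- rewrite !nth_i; try lia.
  have := sums q.+1 ltac:(lia).
  by have [-> -> ->] : [/\ 3 * q.+1 - 2 = (3 * q).+1, 3 * q.+1 - 1 = (3 * q + 1).+1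
                          & 3 * q.+1 = (3 * q + 2).+1] by split; lia.
- have := sums j.-1 ltac:(lia); rewrite !nth_i; try lia.
  by have [-> -> ->] : [/\ 3 * j - 2 = (3 * j.-1).+1, 3 * j - 1 = (3 * j.-1 + 1).+1
                          & 3 * j = (3 * j.-1 + 2).+1] by split; lia.
Qed.

Theorem lemma4 (m B : nat) (S : seq nat) :
  three_partition_instance m B S ->
  sorted geq S ->
  (forall i : nat -> nat, triple_sums_B m B i ->
     qsteps ([::], wS m B S) (Wof m i, Ver m B S)) /\
  (forall W : seq sym,
     qsteps ([::], wS m B S) (W, Ver m B S) ->
     qsteps (W, Ver m B S) ([::], [::]) ->
     exists i : nat -> nat, triple_sums_B m B i /\ W = Wof m i).
Proof.
move=> _ _; split=> [i /triple_sums_BE sums | W reach accept].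
  rewrite /wS catA Wof_slots; apply: run_qsteps.
  by apply: run_Load_Dist; rewrite ?size_map ?size_iota.
have W_free s : s \in [:: e; e0] -> s \notin W.
  by apply: contraL => /(qsteps_accept_sub _ _ accept) /(allP (Ver_free m B S)).
have [|l [size_l sums_l] ->] := run_Load_DistE m B W (W_free e isT) (W_free e0 isT).
  by move: reach; rewrite /wS catA; apply: qsteps_run.
exists (fun k => nth 0 l k.-1).
by rewrite triple_sums_BE Wof_slots -size_l map_nth_iota1.
Qed.
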